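(* Let $O=(|H\rangle\langle H|)^{\otimes n}$ with $|H\rangle=\frac1{\sqrt2}(|0\rangle+e^{i\pi/4}|1\rangle)$, and consider shadow estimation with uniform sampling from the local Clifford group $\mathrm{Cl}_1^{\times n}$. There exist an $n$-qubit state $\rho$ and quantum channels $\Lambda(g)$, $g\in\mathrm{Cl}_1^{\times n}$, such that for the implementation maps $\phi_\epsilon(g)=(1-\epsilon)\omega(g)+\epsilon\,\omega(g)\Lambda(g)$, $\epsilon\in[0,1]$, the bias satisfies $\mathrm{bias}=\kappa\,\epsilon$, where $\kappa$ does not depend on $\epsilon$ and $\kappa\in\Omega(d^{1/4})$ as $n\to\infty$.
   Context: $d=2^n$; $(A|B)=\mathrm{Tr}(A^\dagger B)$; $\omega(g)(A)=gAg^\dagger$ with adjoint $\omega(g)^\dagger(A)=g^\dagger Ag$. $E_x=|x\rangle\langle x|$, $M=\sum_{x\in\mathbb{F}_2^n}|E_x)(E_x|$ where $|A)(B|$ is $C\mapsto (B|C)A$. The local Clifford group is $\mathrm{Cl}_1^{\times n}=\{g_1\otimes\cdots\otimes g_n:g_i\in\mathrm{Cl}_1\}$ with $\mathrm{Cl}_1$ the single-qubit Clifford group. The ideal frame operator is $S=\mathbb{E}_g[\omega(g)^\dagger M\omega(g)]$ and the noisy one $\tilde S_\epsilon=\mathbb{E}_g[\omega(g)^\dagger M\phi_\epsilon(g)]$, $g$ uniform on $\mathrm{Cl}_1^{\times n}$. The bias is $\mathrm{bias}=|\mathrm{Tr}(O\rho)-(O|S^{-1}\tilde S_\epsilon|\rho)|$,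 i.e. the deviation of the expectation of the shadow estimator $\hat o(g,x)=(O|S^{-1}\omega(g)^\dagger|E_x)$ from the true value when gate $g$ is implemented as $\phi_\epsilon(g)$. *)

From HB Require Import structures.
From mathcomp Require Import all_boot all_order all_algebra all_field.
Set Implicit Arguments. Unset Strict Implicit. Unset Printing Implicit Defensive.
Import Order.TTheory GRing.Theory Num.Theory.
Local Open Scope ring_scope.

Definition hadj (m k : nat) (A : 'M[algC]_(m, k)) : 'M[algC]_(k, m) :=
  (map_mx (fun z : algC => z^*) A)^T.

Definition hs (m : nat) (A B : 'M[algC]_m) : algC := \tr (hadj A *m B).

Definition psd (m : nat) (A : 'M[algC]_m) : Prop :=
  hadj A = A /\ forall v : 'cV[algC]_m, 0 <= (hadj v *m A *m v) 0 0.

Definition is_state (m : nat) (rho : 'M[algC]_m) : Prop :=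
  psd rho /\ \tr rho = 1.

Definition is_channel (m : nat) (L : 'M[algC]_m -> 'M[algC]_m) : Prop :=
  exists (r : nat) (K : 'I_r -> 'M[algC]_m),
    \sum_(i < r) hadj (K i) *m K i = 1%:M /\
    forall A, L A = \sum_(i < r) K i *m A *m hadj (K i).

(* superoperators are maps 'M_m -> 'M_m; inverse through the matrix of the
   linear map (lin_mx: mxvec A *m lin_mx F = mxvec (F A)) *)
Definition sinv (m : nat) (F : 'M[algC]_m -> 'M[algC]_m) :
    'M[algC]_m -> 'M[algC]_m :=
  fun A => vec_mx (mxvec A *m invmx (lin_mx F)).

Definition unif_mean (T : finType) (f : T -> algC) : algC :=
  #|T|%:R^-1 * \sum_(t : T) f t.
Definition unif_mean_op (T : finType) (m : nat)
    (f : T -> 'M[algC]_m -> 'M[algC]_m) : 'M[algC]_m -> 'M[algC]_m :=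
  fun A => #|T|%:R^-1 *: \sum_(t : T) f t A.

(* the computational basis index x : 'I_(2^n) is identified with the bit string
   in F_2^n whose i-th bit is bit x i *)
Definition bit (n : nat) (x : 'I_(2 ^ n)) (i : 'I_n) : 'I_2 :=
  inord (odd (x %/ 2 ^ i)).

(* n-fold tensor product A_0 (x) ... (x) A_{n-1} of one-qubit operators *)
Definition ntens (n : nat) (A : 'I_n -> 'M[algC]_2) : 'M[algC]_(2 ^ n) :=
  \matrix_(x, y) \prod_(i < n) A i (bit x i) (bit y i).

Definition Ebas (n : nat) (x : 'I_(2 ^ n)) : 'M[algC]_(2 ^ n) := delta_mx x x.

Definition Mmeas (n : nat) (A : 'M[algC]_(2 ^ n)) : 'M[algC]_(2 ^ n) :=
  \sum_(x < 2 ^ n) hs (Ebas x) A *: Ebas x.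

Definition isq2 : algC := (sqrtC 2)^-1.
Definition PauliI : 'M[algC]_2 := 1%:M.
Definition PauliX : 'M[algC]_2 := \matrix_(i, j) (if i != j then 1 else 0).
Definition PauliZ : 'M[algC]_2 :=
  \matrix_(i, j) (if i == j then (if i == 0 then 1 else -1) else 0).
Definition PauliY : 'M[algC]_2 := 'i *: (PauliX *m PauliZ).
Definition Hgate : 'M[algC]_2 :=
  \matrix_(i, j) (if (i == 1) && (j == 1) then - isq2 else isq2).
Definition Sgate : 'M[algC]_2 :=
  \matrix_(i, j) (if i == j then (if i == 0 then 1 else 'i) else 0).

(* the 6 representatives of the action on the Pauli axes *)
Definition cl_perm (a : 'I_6) : 'M[algC]_2 :=
  match val a with
  | 0 => 1%:M
  | 1 => Hgate
  | 2 => Sgate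
  | 3 => Hgate *m Sgate
  | 4 => Sgate *m Hgate
  | _ => Hgate *m Sgate *m Hgate
  end.
Definition pauli (b : 'I_4) : 'M[algC]_2 :=
  match val b with
  | 0 => PauliI | 1 => PauliX | 2 => PauliY | _ => PauliZ
  end.

(* Cl_1 (modulo phases, which do not affect omega(g)) has the 24 elements
   P_b C_a, a : 'I_6, b : 'I_4 *)
Definition Cl1 : finType := ('I_6 * 'I_4)%type.
Definition cl1_mx (g : Cl1) : 'M[algC]_2 := pauli g.2 *m cl_perm g.1.

Definition LCl (n : nat) : finType := {ffun 'I_n -> Cl1}.
Definition lcl_mx (n : nat) (g : LCl n) : 'M[algC]_(2 ^ n) :=
  ntens (fun i => cl1_mx (g i)).

Definition omega (n : nat) (g : LCl n) (A : 'M[algC]_(2 ^ n)) :=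
  lcl_mx g *m A *m hadj (lcl_mx g).
Definition omega_adj (n : nat) (g : LCl n) (A : 'M[algC]_(2 ^ n)) :=
  hadj (lcl_mx g) *m A *m lcl_mx g.

Definition frameS (n : nat) : 'M[algC]_(2 ^ n) -> 'M[algC]_(2 ^ n) :=
  unif_mean_op (fun g : LCl n => fun A => omega_adj g (Mmeas (omega g A))).

Definition phi_eps (n : nat) (Lam : LCl n -> 'M[algC]_(2 ^ n) -> 'M[algC]_(2 ^ n))
    (eps : algC) (g : LCl n) (A : 'M[algC]_(2 ^ n)) : 'M[algC]_(2 ^ n) :=
  (1 - eps) *: omega g A + eps *: omega g (Lam g A).

Definition frameS_noisy (n : nat)
    (Lam : LCl n -> 'M[algC]_(2 ^ n) -> 'M[algC]_(2 ^ n)) (eps : algC) :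
    'M[algC]_(2 ^ n) -> 'M[algC]_(2 ^ n) :=
  unif_mean_op (fun g : LCl n => fun A => omega_adj g (Mmeas (phi_eps Lam eps g A))).

Definition bias (n : nat) (O rho : 'M[algC]_(2 ^ n))
    (Lam : LCl n -> 'M[algC]_(2 ^ n) -> 'M[algC]_(2 ^ n)) (eps : algC) : algC :=
  `| \tr (O *m rho) - hs O (sinv (@frameS n) (frameS_noisy Lam eps rho)) |.

(* |H> = (|0> + e^{i pi/4} |1>)/sqrt 2, with e^{i pi/4} = (1 + i)/sqrt 2 *)
Definition ketH : 'cV[algC]_2 :=
  \col_i (if i == 0 then isq2 else isq2 * ((1 + 'i) * isq2)).
Definition projH : 'M[algC]_2 := ketH *m hadj ketH.
Definition Obs (n : nat) : 'M[algC]_(2 ^ n) := ntens (fun _ => projH).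

From HB Require Import structures.
From mathcomp Require Import all_boot all_order all_algebra all_field.
From mathcomp Require Import ring.
Set Implicit Arguments. Unset Strict Implicit. Unset Printing Implicit Defensive.
Import Order.TTheory GRing.Theory Num.Theory.
Local Open Scope ring_scope.

(* Take rho = |0...0><0...0| and let the noise Lambda(g) discard its input and
   prepare g^dagger |x_g><x_g| g, a product state, so that the faulty gate
   omega(g) Lambda(g) always yields the outcome x_g.  The frame operator of the
   local Clifford group is the n-th tensor power of the single-qubit
   depolarizing map X |-> (X + tr X I)/3, so S^{-1} is the tensor power of
   X |-> 3X - tr X I.  As S~_eps = (1 - eps) S + eps D with D rho a product
   state, the bias is eps |Tr(O rho) - (O|S^{-1} D rho)| = eps |2^-n - q^n|,
   where q = (1 + sqrt 2)/2 is the single-qubit factor obtained when x_g is the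
   more likely outcome of g|H>.  Since q^4 >= 2, kappa >= d^(1/4)/2.  The
   single-qubit identities are checked by exact computation in Q(i, sqrt 2). *)

(** * Matrix preliminaries *)

Lemma hadjM m k p (A : 'M[algC]_(m, k)) (B : 'M[algC]_(k, p)) :
  hadj (A *m B) = hadj B *m hadj A.
Proof.
apply/matrixP => i j; rewrite !mxE rmorph_sum; apply: eq_bigr => l _.
by rewrite !mxE rmorphM mulrC.
Qed.

Lemma hadj_delta m k (i : 'I_m) (j : 'I_k) : hadj (delta_mx i j) = delta_mx j i.
Proof. by apply/matrixP => a b; rewrite !mxE conjC_nat andbC. Qed.

Lemma hadjK m k (A : 'M[algC]_(m, k)) : hadj (hadj A) = A.
Proof. by apply/matrixP => i j; rewrite !mxE conjCK. Qed.

Lemma mulmx_delta_entry m k p (A : 'M[algC]_(m, k)) (x : 'I_k) (y : 'I_p) z l :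
  (A *m delta_mx x y) z l = A z x * (l == y)%:R.
Proof.
rewrite mxE (bigD1 x) //= big1 => [|u /negbTE ne]; last by rewrite mxE ne mulr0.
by rewrite mxE eqxx addr0.
Qed.

Lemma mxtrace_mul_delta m (A : 'M[algC]_m) t : \tr (A *m delta_mx t t) = A t t.
Proof.
rewrite /mxtrace (bigD1 t) //= big1 => [|s /negbTE ne].
  by rewrite mulmx_delta_entry eqxx mulr1 addr0.
by rewrite mulmx_delta_entry ne mulr0.
Qed.

Lemma mxtrace_delta (R : pzRingType) m (s t : 'I_m) :
  \tr (delta_mx s t : 'M[R]_m) = (s == t)%:R.
Proof.
rewrite /mxtrace (bigD1 s) //= big1 => [|i /negbTE ne]; last by rewrite mxE ne.
by rewrite mxE eqxx addr0 eq_sym.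
Qed.

Lemma sum_delta_diag m : \sum_(k < m) delta_mx k k = 1%:M :> 'M[algC]_m.
Proof.
apply/matrixP => a b; rewrite summxE mxE (bigD1 a) //= big1 => [|k /negbTE ne].
  by rewrite mxE eqxx addr0 eq_sym.
by rewrite mxE eq_sym ne.
Qed.

Lemma conj_basis_entry m k (A : 'M[algC]_(m, k)) x s t :
  (hadj A *m delta_mx x x *m A) s t = (A x s)^* * A x t.
Proof.
rewrite mxE (bigD1 x) //= big1 => [|y /negbTE ne]; last first.
  by rewrite mulmx_delta_entry ne mulr0 mul0r.
by rewrite mulmx_delta_entry eqxx mulr1 addr0 !mxE.
Qed.

Definition diag_part m (A : 'M[algC]_m) : 'M[algC]_m :=
  \matrix_(i, j) (A i i *+ (i == j)).

Lemma diag_part_is_linear m : linear (@diag_part m).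
Proof. by move=> a A B; apply/matrixP => i j; rewrite !mxE mulrnDl mulrnAr. Qed.
HB.instance Definition _ m :=
  GRing.isLinear.Build algC 'M[algC]_m 'M[algC]_m *:%R (@diag_part m)
    (@diag_part_is_linear m).

Lemma diag_part_delta m (s : 'I_m) : diag_part (delta_mx s s) = delta_mx s s.
Proof.
apply/matrixP => i j; rewrite !mxE andbb.
by case: (eqVneq i s) => [->|_]; rewrite ?mul0rn //= eq_sym.
Qed.

Lemma eq_linear_delta m k (V : lmodType algC) (f g : {linear 'M[algC]_(m, k) -> V}) :
  (forall i j, f (delta_mx i j) = g (delta_mx i j)) -> f =1 g.
Proof.
move=> fg A; rewrite (matrix_sum_delta A) !linear_sum; apply: eq_bigr => i _.
by rewrite !linear_sum; apply: eq_bigr => j _; rewrite !linearZ fg.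
Qed.

Definition dephase m (U X : 'M[algC]_m) : 'M[algC]_m :=
  hadj U *m diag_part (U *m X *m hadj U) *m U.

Lemma dephase_is_linear m (U : 'M[algC]_m) : linear (dephase U).
Proof.
move=> a X Y; rewrite /dephase mulmxDr mulmxDl -scalemxAr -scalemxAl linearP.
by rewrite mulmxDr mulmxDl -scalemxAr -scalemxAl.
Qed.
HB.instance Definition _ m U := GRing.isLinear.Build algC 'M[algC]_m 'M[algC]_m
  *:%R (@dephase m U) (dephase_is_linear U).

Lemma dephase_rotated_basis m (U : 'M[algC]_m) s : U *m hadj U = 1%:M ->
  dephase U (hadj U *m delta_mx s s *m U) = hadj U *m delta_mx s s *m U.
Proof.
by move=> UU; rewrite /dephase !mulmxA UU mul1mx -!mulmxA UU mulmx1 diag_part_delta.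
Qed.

(** * Exact arithmetic in Q(i, sqrt 2) *)

(* This field contains every entry of the single-qubit Cliffords and of |H>. *)
Record cyc8 := Cyc8 { cq : rat; ci : rat; cs : rat; cis : rat }.

Definition cyc8_val (x : cyc8) : algC :=
  ratr (cq x) + ratr (ci x) * 'i + ratr (cs x) * sqrtC 2
  + ratr (cis x) * ('i * sqrtC 2).

Definition cyc8_rat (r : rat) : cyc8 := Cyc8 r 0 0 0.
Definition cyc8_i : cyc8 := Cyc8 0 1 0 0.
Definition cyc8_add (x y : cyc8) : cyc8 :=
  Cyc8 (cq x + cq y) (ci x + ci y) (cs x + cs y) (cis x + cis y).
Definition cyc8_opp (x : cyc8) : cyc8 := Cyc8 (- cq x) (- ci x) (- cs x) (- cis x).
Definition cyc8_mul (x y : cyc8) : cyc8 := Cyc8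
  (cq x * cq y - ci x * ci y + 2%:R * (cs x * cs y) - 2%:R * (cis x * cis y))
  (cq x * ci y + ci x * cq y + 2%:R * (cs x * cis y) + 2%:R * (cis x * cs y))
  (cq x * cs y + cs x * cq y - ci x * cis y - cis x * ci y)
  (cq x * cis y + cis x * cq y + ci x * cs y + cs x * ci y).
Definition cyc8_conj (x : cyc8) : cyc8 := Cyc8 (cq x) (- ci x) (cs x) (- cis x).
Definition cyc8_eqb (x y : cyc8) : bool :=
  [&& cq x == cq y, ci x == ci y, cs x == cs y & cis x == cis y].

Lemma cyc8_eqb_eq x y : cyc8_eqb x y -> x = y.
Proof.
by case: x y => [? ? ? ?] [? ? ? ?] /and4P[/= /eqP-> /eqP-> /eqP-> /eqP->].
Qed.

Lemma cyc8_val_rat r : cyc8_val (cyc8_rat r) = ratr r.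
Proof. by rewrite /cyc8_val /= !rmorph0 /=; ring. Qed.

Lemma cyc8_val_nat k : cyc8_val (cyc8_rat k%:R) = k%:R.
Proof. by rewrite cyc8_val_rat rmorph_nat. Qed.

Lemma cyc8_val_natV k : cyc8_val (cyc8_rat k%:R^-1) = k%:R^-1.
Proof. by rewrite cyc8_val_rat fmorphV rmorph_nat. Qed.

Lemma cyc8_val_i : cyc8_val cyc8_i = 'i.
Proof. by rewrite /cyc8_val /= rmorph0 rmorph1 /=; ring. Qed.

Lemma cyc8_valD x y : cyc8_val (cyc8_add x y) = cyc8_val x + cyc8_val y.
Proof. by rewrite /cyc8_val /= !rmorphD /=; ring. Qed.

Lemma cyc8_valN x : cyc8_val (cyc8_opp x) = - cyc8_val x.
Proof. by rewrite /cyc8_val /= !rmorphN /=; ring. Qed.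

Lemma cyc8_valM x y : cyc8_val (cyc8_mul x y) = cyc8_val x * cyc8_val y.
Proof.
set i : algC := 'i; set s : algC := sqrtC 2.
have ii : i * i = -1 by rewrite -expr2 sqrCi.
have ss : s * s = 2 by rewrite -expr2 sqrtCK.
have expand (a b c d a' b' c' d' : algC) :
    (a + b * i + c * s + d * (i * s)) * (a' + b' * i + c' * s + d' * (i * s))
  = (a * a' - b * b' + 2 * (c * c') - 2 * (d * d'))
  + (a * b' + b * a' + 2 * (c * d') + 2 * (d * c')) * i
  + (a * c' + c * a' - b * d' - d * b') * s
  + (a * d' + d * a' + b * c' + c * b') * (i * s).
  transitivity (a * a' + b * b' * (i * i) + c * c' * (s * s)
    + d * d' * ((i * i) * (s * s))
    + (a * b' + b * a' + c * d' * (s * s) + d * c' * (s * s)) * i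
    + (a * c' + c * a' + b * d' * (i * i) + d * b' * (i * i)) * s
    + (a * d' + d * a' + b * c' + c * b') * (i * s)); first by ring.
  by rewrite ii ss; ring.
rewrite /cyc8_val /= -/i -/s expand.
rewrite !(rmorphD, rmorphN, rmorphM, rmorph_nat); ring.
Qed.

Lemma cyc8_val_conj x : (cyc8_val x)^* = cyc8_val (cyc8_conj x).
Proof.
have s2R : (sqrtC 2)^* = sqrtC 2 :> algC by rewrite geC0_conj // sqrtC_ge0 ler0n.
have ratR (r : rat) : (ratr r : algC)^* = ratr r by rewrite fmorph_rat.
have ratRM (r : rat) (z : algC) : (ratr r * z)^* = ratr r * z^*.
  by rewrite rmorphM /= fmorph_rat.
rewrite /cyc8_val /= !rmorphD /= !ratRM ratR rmorphM /= conjCi s2R !rmorphN /=.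
ring.
Qed.

(* [enum Cl1] is opaque to [vm_compute]; this enumeration is not. *)
Definition cl1_seq : seq Cl1 :=
  [seq (Ordinal (@ltn_pmod a 6 isT), Ordinal (@ltn_pmod b 4 isT))
  | a <- iota 0 6, b <- iota 0 4].

Lemma mem_cl1_seq g : g \in cl1_seq.
Proof.
case: g => a b; apply/allpairsP; exists (val a, val b).
by rewrite !mem_iota !ltn_ord; split=> //; congr pair; apply: val_inj;
  rewrite /= modn_small.
Qed.

Lemma perm_cl1_seq : perm_eq (enum Cl1) cl1_seq.
Proof.
apply: uniq_perm; first exact: enum_uniq.
  by apply: (@map_uniq _ _ (fun g : Cl1 => (val g.1, val g.2))); vm_compute.
by move=> g; rewrite mem_enum mem_cl1_seq.
Qed.

Lemma big_Cl1 (R : Type) (idx : R) (op : Monoid.com_law idx) (F : Cl1 -> R) :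
  \big[op/idx]_(g : Cl1) F g = \big[op/idx]_(g <- cl1_seq) F g.
Proof. by rewrite -big_enum /=; apply: perm_big; exact: perm_cl1_seq. Qed.

Definition cyc8_sum (T : Type) (s : seq T) (F : T -> cyc8) : cyc8 :=
  foldr (fun x acc => cyc8_add (F x) acc) (cyc8_rat 0) s.

Lemma cyc8_val_sum (T : Type) (s : seq T) (F : T -> cyc8) :
  cyc8_val (cyc8_sum s F) = \sum_(x <- s) cyc8_val (F x).
Proof.
elim: s => [|x s IH]; first by rewrite big_nil cyc8_val_rat rmorph0.
by rewrite big_cons -IH /= cyc8_valD.
Qed.

(* Matrices are represented by tables on nat x nat (only the entries inside
   the dimensions matter), so that [vm_compute] can evaluate products. *)
Definition tab : Type := nat -> nat -> cyc8.

Definition tab_rep m k (A : 'M[algC]_(m, k)) (P : tab) :=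
  forall (i : 'I_m) (j : 'I_k), A i j = cyc8_val (P i j).

Definition tab_mul k (P Q : tab) : tab :=
  fun i j => cyc8_sum (iota 0 k) (fun l => cyc8_mul (P i l) (Q l j)).
Definition tab_adj (P : tab) : tab := fun i j => cyc8_conj (P j i).
Definition tab_add (P Q : tab) : tab := fun i j => cyc8_add (P i j) (Q i j).
Definition tab_scale (c : cyc8) (P : tab) : tab := fun i j => cyc8_mul c (P i j).
Definition tab_diag (P : tab) : tab :=
  fun i j => if i == j then P i i else cyc8_rat 0.
Definition tab_delta (s t : nat) : tab :=
  fun i j => cyc8_rat ((i == s) && (j == t))%:R.
Definition tab_id : tab := fun i j => cyc8_rat (i == j)%:R.
Definition tab_tr m (P : tab) : cyc8 := cyc8_sum (iota 0 m) (fun l => P l l).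
Definition tab_sum_cl1 (P : Cl1 -> tab) : tab :=
  fun i j => cyc8_sum cl1_seq (fun g => P g i j).

Section TableRep.
Variables m k p : nat.

Lemma rep_mulmx (A : 'M_(m, k)) (B : 'M_(k, p)) P Q :
  tab_rep A P -> tab_rep B Q -> tab_rep (A *m B) (tab_mul k P Q).
Proof.
move=> rA rB i j; rewrite mxE cyc8_val_sum -val_enum_ord big_map /=.
by rewrite big_enum /=; apply: eq_bigr => l _; rewrite rA rB cyc8_valM.
Qed.

Lemma rep_adj (A : 'M_(m, k)) P : tab_rep A P -> tab_rep (hadj A) (tab_adj P).
Proof. by move=> rA i j; rewrite !mxE rA cyc8_val_conj. Qed.

Lemma rep_add (A B : 'M_(m, k)) P Q :
  tab_rep A P -> tab_rep B Q -> tab_rep (A + B) (tab_add P Q).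
Proof. by move=> rA rB i j; rewrite !mxE rA rB cyc8_valD. Qed.

Lemma rep_scale (A : 'M_(m, k)) P c :
  tab_rep A P -> tab_rep (cyc8_val c *: A) (tab_scale c P).
Proof. by move=> rA i j; rewrite !mxE rA cyc8_valM. Qed.

Lemma rep_delta (s : 'I_m) (t : 'I_k) : tab_rep (delta_mx s t) (tab_delta s t).
Proof. by move=> i j; rewrite mxE cyc8_val_rat rmorph_nat. Qed.

Lemma rep_sum_cl1 (F : Cl1 -> 'M_(m, k)) P :
  (forall g, tab_rep (F g) (P g)) -> tab_rep (\sum_g F g) (tab_sum_cl1 P).
Proof.
move=> rF i j; rewrite summxE cyc8_val_sum big_Cl1.
by apply: eq_bigr => g _; rewrite rF.
Qed.

Lemma rep_1 : tab_rep (1%:M : 'M[algC]_m) tab_id.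
Proof. by move=> i j; rewrite mxE cyc8_val_rat rmorph_nat. Qed.

Lemma rep_diag (A : 'M_m) P : tab_rep A P -> tab_rep (diag_part A) (tab_diag P).
Proof.
move=> rA i j; rewrite mxE /tab_diag -(inj_eq val_inj).
by case: eqP => [/val_inj->|_]; rewrite ?mulr1n ?rA // cyc8_val_rat rmorph0.
Qed.

Lemma mxtrace_rep (A : 'M_m) P : tab_rep A P -> \tr A = cyc8_val (tab_tr m P).
Proof.
move=> rA; rewrite cyc8_val_sum -val_enum_ord big_map big_enum /=.
by apply: eq_bigr => l _; rewrite rA.
Qed.

End TableRep.

Lemma ord2_ind (Q : 'I_2 -> Prop) : Q 0 -> Q 1 -> forall i, Q i.
Proof.
move=> Q0 Q1 [[|[|//]] i2].
- by rewrite (_ : Ordinal i2 = 0) //; apply: val_inj.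
- by rewrite (_ : Ordinal i2 = 1) //; apply: val_inj.
Qed.

(* Sharing the four entries of a 2 x 2 table keeps the evaluation of nested
   products linear instead of exponential in the nesting depth. *)
Definition tab_memo2 (P : tab) : tab :=
  let a := P 0%N 0%N in let b := P 0%N 1%N in
  let c := P 1%N 0%N in let d := P 1%N 1%N in
  fun i j => if i == 0%N then (if j == 0%N then a else b)
            else (if j == 0%N then c else d).

Lemma rep_memo2 (A : 'M_2) P : tab_rep A P -> tab_rep A (tab_memo2 P).
Proof. by move=> rA i j; rewrite rA; move: i j; do 2!apply: ord2_ind. Qed.

Definition tab_mul2 (P Q : tab) : tab := tab_memo2 (tab_mul 2 P Q).

Lemma rep_mulmx2 (A B : 'M_2) P Q :
  tab_rep A P -> tab_rep B Q -> tab_rep (A *m B) (tab_mul2 P Q).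
Proof. by move=> rA rB; apply/rep_memo2/rep_mulmx. Qed.

Definition tab_eq2 (P Q : tab) : bool :=
  all (fun i => all (fun j => cyc8_eqb (P i j) (Q i j)) (iota 0 2)) (iota 0 2).

Lemma eq_rep2 (A B : 'M_2) P Q :
  tab_rep A P -> tab_rep B Q -> tab_eq2 P Q -> A = B.
Proof.
move=> rA rB /allP PQ; apply/matrixP => i j; rewrite rA rB.
have mem2 (l : 'I_2) : nat_of_ord l \in iota 0 2 by rewrite mem_iota ltn_ord.
by have /allP/(_ j (mem2 j))/cyc8_eqb_eq-> := PQ i (mem2 i).
Qed.

(** * Single-qubit Cliffords *)

Definition cyc8_isq2 : cyc8 := Cyc8 0 0 (1 / 2%:R) 0.

Lemma isq2E : isq2 = cyc8_val cyc8_isq2.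
Proof.
have s2_neq0 : sqrtC 2 != 0 :> algC by rewrite sqrtC_eq0 pnatr_eq0.
rewrite /isq2 /cyc8_val /= !rmorph0 rmorphM rmorph1 fmorphV rmorph_nat /=.
apply: (mulfI s2_neq0); rewrite mulfV // !mul0r !add0r addr0.
by rewrite mulrCA -expr2 sqrtCK mul1r mulVf ?pnatr_eq0.
Qed.

Definition H_tab : tab := fun i j =>
  if (i == 1%N) && (j == 1%N) then cyc8_opp cyc8_isq2 else cyc8_isq2.
Definition S_tab : tab := fun i j =>
  if i == j then (if i == 0%N then cyc8_rat 1 else cyc8_i) else cyc8_rat 0.
Definition X_tab : tab := fun i j => cyc8_rat (i != j)%:R.
Definition Z_tab : tab := fun i j =>
  cyc8_rat (if i == j then (if i == 0%N then 1 else -1) else 0).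
Definition Y_tab : tab := tab_scale cyc8_i (tab_mul 2 X_tab Z_tab).

Definition cl_perm_tab (a : nat) : tab :=
  match a with
  | 0 => tab_id
  | 1 => H_tab
  | 2 => S_tab
  | 3 => tab_mul 2 H_tab S_tab
  | 4 => tab_mul 2 S_tab H_tab
  | _ => tab_mul 2 (tab_mul 2 H_tab S_tab) H_tab
  end.
Definition pauli_tab (b : nat) : tab :=
  match b with 0 => tab_id | 1 => X_tab | 2 => Y_tab | _ => Z_tab end.
Definition cl1_tab (g : Cl1) : tab :=
  tab_mul2 (pauli_tab (val g.2)) (cl_perm_tab (val g.1)).

Ltac case_ord2 := move=> [[|[|//]] ?] [[|[|//]] ?]; rewrite !mxE /=.

Lemma rep_H : tab_rep Hgate H_tab.
Proof. by case_ord2; rewrite /H_tab /= ?cyc8_valN isq2E. Qed.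

Lemma rep_S : tab_rep Sgate S_tab.
Proof.
by case_ord2; rewrite /S_tab /= ?cyc8_val_i ?cyc8_val_rat ?rmorph0 ?rmorph1.
Qed.

Lemma rep_X : tab_rep PauliX X_tab.
Proof. by case_ord2; rewrite /X_tab cyc8_val_rat rmorph_nat. Qed.

Lemma rep_Z : tab_rep PauliZ Z_tab.
Proof.
by case_ord2; rewrite /Z_tab cyc8_val_rat /= ?rmorph0 ?rmorph1 ?rmorphN1.
Qed.

Lemma rep_Y : tab_rep PauliY Y_tab.
Proof. by rewrite /PauliY -cyc8_val_i; exact/rep_scale/(rep_mulmx rep_X rep_Z). Qed.

Lemma rep_cl1 g : tab_rep (cl1_mx g) (cl1_tab g).
Proof.
apply: rep_mulmx2.
  by rewrite /pauli /pauli_tab; case: (val g.2) => [|[|[|?]]];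
    [exact: rep_1 | exact: rep_X | exact: rep_Y | exact: rep_Z].
rewrite /cl_perm /cl_perm_tab; case: (val g.1) => [|[|[|[|[|?]]]]].
- exact: rep_1.
- exact: rep_H.
- exact: rep_S.
- exact: rep_mulmx rep_H rep_S.
- exact: rep_mulmx rep_S rep_H.
- exact: rep_mulmx (rep_mulmx rep_H rep_S) rep_H.
Qed.

Definition ketH_tab : tab := fun i _ =>
  if i == 0%N then cyc8_isq2
  else cyc8_mul cyc8_isq2 (cyc8_mul (cyc8_add (cyc8_rat 1) cyc8_i) cyc8_isq2).

Lemma rep_ketH : tab_rep ketH ketH_tab.
Proof.
move=> [[|[|//]] ?] j; rewrite !mxE /ketH_tab /= ?isq2E //.
by rewrite !cyc8_valM cyc8_valD cyc8_val_rat rmorph1 cyc8_val_i.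
Qed.

Lemma rep_projH : tab_rep projH (tab_mul 1 ketH_tab (tab_adj ketH_tab)).
Proof. exact: rep_mulmx rep_ketH (rep_adj rep_ketH). Qed.

Lemma cl1_mx_unitary g : cl1_mx g *m hadj (cl1_mx g) = 1%:M.
Proof.
apply: (eq_rep2 (rep_mulmx2 (rep_cl1 g) (rep_adj (rep_cl1 g))) (@rep_1 2)).
have /allP : all (fun g => tab_eq2 (tab_mul2 (cl1_tab g) (tab_adj (cl1_tab g))) tab_id)
  cl1_seq by vm_compute.
by apply; exact: mem_cl1_seq.
Qed.

Definition cl1_mean (F : Cl1 -> 'M[algC]_2) : 'M[algC]_2 :=
  24%:R^-1 *: \sum_g F g.
Definition frame1 (X : 'M[algC]_2) : 'M[algC]_2 :=
  cl1_mean (fun g => dephase (cl1_mx g) X).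
Definition frame1_inv (X : 'M[algC]_2) : 'M[algC]_2 :=
  3%:R *: X - \tr X *: 1%:M.

Lemma frame1_is_linear : linear frame1.
Proof.
move=> a X Y; rewrite /frame1 /cl1_mean.
under eq_bigr do rewrite linearP.
by rewrite big_split -scaler_sumr /= scalerDr !scalerA mulrC.
Qed.
HB.instance Definition _ :=
  GRing.isLinear.Build algC 'M[algC]_2 'M[algC]_2 *:%R frame1 frame1_is_linear.

Lemma frame1_inv_is_linear : linear frame1_inv.
Proof.
move=> a X Y; rewrite /frame1_inv mxtraceD mxtraceZ.
by apply/matrixP => i j; rewrite !mxE; ring.
Qed.
HB.instance Definition _ := GRing.isLinear.Build algC 'M[algC]_2 'M[algC]_2
  *:%R frame1_inv frame1_inv_is_linear.

Definition dephase_tab (U P : tab) : tab :=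
  tab_mul2 (tab_mul2 (tab_adj U) (tab_diag (tab_mul2 (tab_mul2 U P) (tab_adj U)))) U.
Definition cl1_mean_tab (P : Cl1 -> tab) : tab :=
  tab_memo2 (tab_scale (cyc8_rat 24%:R^-1) (tab_sum_cl1 P)).

Lemma rep_dephase (U X : 'M[algC]_2) P Q :
  tab_rep U P -> tab_rep X Q -> tab_rep (dephase U X) (dephase_tab P Q).
Proof.
move=> rU rX; have rUX := rep_mulmx2 (rep_mulmx2 rU rX) (rep_adj rU).
exact: rep_mulmx2 (rep_mulmx2 (rep_adj rU) (rep_diag rUX)) rU.
Qed.

Lemma rep_cl1_mean F P :
  (forall g, tab_rep (F g) (P g)) -> tab_rep (cl1_mean F) (cl1_mean_tab P).
Proof.
move=> rF; apply: rep_memo2; rewrite /cl1_mean -(cyc8_val_natV 24).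
exact/rep_scale/rep_sum_cl1.
Qed.

Definition depol1 (X : 'M[algC]_2) : 'M[algC]_2 := 3%:R^-1 *: (X + \tr X *: 1%:M).

Lemma depol1_is_linear : linear depol1.
Proof.
move=> a X Y; rewrite /depol1 mxtraceD mxtraceZ.
by apply/matrixP => i j; rewrite !mxE; ring.
Qed.
HB.instance Definition _ :=
  GRing.isLinear.Build algC 'M[algC]_2 'M[algC]_2 *:%R depol1 depol1_is_linear.

Lemma frame1_delta s t : frame1 (delta_mx s t) = depol1 (delta_mx s t).
Proof.
rewrite /depol1 mxtrace_delta -(cyc8_val_natV 3) -cyc8_val_nat.
apply: (eq_rep2 (rep_cl1_mean (fun g => rep_dephase (rep_cl1 g) (rep_delta s t)))).
  exact/rep_scale/rep_add/rep_scale/rep_1/rep_delta.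
by move: s t; do 2!apply: ord2_ind; vm_compute.
Qed.

(* Cl_1 is a unitary 2-design, hence its frame operator is depolarizing. *)
Lemma frame1E : frame1 =1 depol1.
Proof. exact: eq_linear_delta frame1_delta. Qed.

Lemma frame1_invK : cancel frame1 frame1_inv.
Proof.
move=> X; rewrite frame1E /depol1 /frame1_inv mxtraceZ mxtraceD mxtraceZ mxtrace1.
by apply/matrixP => i j; rewrite !mxE; field.
Qed.

(* The more likely outcome when g|H> is measured in the computational basis. *)
Definition likely_outcome (g : Cl1) : 'I_2 :=
  if (val g.1 == 3%N) (+) ((val g.2 == 1%N) || (val g.2 == 2%N)) then 1 else 0.

Definition cl1_state (g : Cl1) : 'M[algC]_2 :=
  hadj (cl1_mx g) *m delta_mx (likely_outcome g) (likely_outcome g) *m cl1_mx g.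

Lemma mxtrace_cl1_state g : \tr (cl1_state g) = 1.
Proof.
by rewrite mxtrace_mulC mulmxA cl1_mx_unitary mul1mx mxtrace_delta eqxx.
Qed.

Lemma dephase_cl1_state g : dephase (cl1_mx g) (cl1_state g) = cl1_state g.
Proof. exact/dephase_rotated_basis/cl1_mx_unitary. Qed.

Definition frame1_inv_tab (P : tab) : tab :=
  tab_memo2 (tab_add (tab_scale (cyc8_rat 3%:R) P)
                     (tab_scale (cyc8_opp (tab_tr 2 P)) tab_id)).

Lemma rep_frame1_inv X P : tab_rep X P -> tab_rep (frame1_inv X) (frame1_inv_tab P).
Proof.
move=> rX; apply: rep_memo2.
rewrite /frame1_inv -scaleNr (mxtrace_rep rX) -cyc8_valN -(cyc8_val_nat 3).
exact/rep_add/rep_scale/rep_1/rep_scale.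
Qed.

Lemma projH_diag t : projH t t = 2%:R^-1.
Proof.
rewrite -(cyc8_val_natV 2) rep_projH; apply/(congr1 cyc8_val)/cyc8_eqb_eq.
by move: t; apply: ord2_ind; vm_compute.
Qed.

Definition cl1_state_tab (g : Cl1) : tab :=
  tab_mul2 (tab_mul2 (tab_adj (cl1_tab g))
    (tab_delta (likely_outcome g) (likely_outcome g))) (cl1_tab g).

Lemma rep_cl1_state g : tab_rep (cl1_state g) (cl1_state_tab g).
Proof.
exact: rep_mulmx2 (rep_mulmx2 (rep_adj (rep_cl1 g)) (rep_delta _ _)) (rep_cl1 g).
Qed.

Lemma hs_projH_mean_state :
  hs projH (frame1_inv (cl1_mean cl1_state)) = (1 + sqrtC 2) / 2%:R.
Proof.
have -> : (1 + sqrtC 2) / 2%:R = cyc8_val (Cyc8 (1 / 2%:R) 0 (1 / 2%:R) 0).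
  rewrite /cyc8_val /= rmorph0 !mul0r !addr0 rmorphM rmorph1 fmorphV rmorph_nat.
  by rewrite /= mul1r mulrDl mul1r mulrC.
rewrite /hs (mxtrace_rep (rep_mulmx (rep_adj rep_projH)
  (rep_frame1_inv (rep_cl1_mean rep_cl1_state)))).
by apply/(congr1 cyc8_val)/cyc8_eqb_eq; vm_compute.
Qed.

(** * Tensor products over the computational basis *)

Lemma bitE n (x : 'I_(2 ^ n)) i : val (bit x i) = odd (x %/ 2 ^ i).
Proof. by rewrite /bit /= inordK //; case: odd. Qed.

Lemma binary_expansion n x : (x < 2 ^ n)%N ->
  x = (\sum_(i < n) odd (x %/ 2 ^ i) * 2 ^ i)%N.
Proof.
elim: n x => [|n IH] x x_lt; first by move: x_lt; rewrite big_ord0 ltnS leqn0 => /eqP.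
rewrite big_ord_recl /= expn0 divn1 muln1.
have half_lt : (x./2 < 2 ^ n)%N by rewrite -divn2 ltn_divLR // mulnC -expnS.
have -> : (\sum_(i < n) odd (x %/ 2 ^ bump 0 i) * 2 ^ bump 0 i = 2 * x./2)%N.
  rewrite [in RHS](IH _ half_lt) big_distrr /=; apply: eq_bigr => i _.
  by rewrite /bump /= add1n expnS divnMA divn2 mulnCA.
by rewrite -[in LHS](odd_double_half x) -mul2n.
Qed.

Lemma eq_bits n (x y : 'I_(2 ^ n)) : (forall i, bit x i = bit y i) -> x = y.
Proof.
move=> xy; apply: val_inj.
rewrite /= (binary_expansion (ltn_ord x)) (binary_expansion (ltn_ord y)).
by apply: eq_bigr => i _; rewrite -!bitE xy.
Qed.

Definition bits n (x : 'I_(2 ^ n)) : {ffun 'I_n -> 'I_2} := [ffun i => bit x i].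

Lemma bits_bij n : bijective (@bits n).
Proof.
apply: inj_card_bij; last by rewrite card_ffun !card_ord.
by move=> x y /ffunP xy; apply: eq_bits => i; have := xy i; rewrite !ffunE.
Qed.

Lemma sum_prod_bits n (F : 'I_n -> 'I_2 -> algC) :
  \sum_(x < 2 ^ n) \prod_(i < n) F i (bit x i) = \prod_(i < n) \sum_(t < 2) F i t.
Proof.
rewrite bigA_distr_bigA /= (reindex (@bits n)) /=; last exact/onW_bij/bits_bij.
by apply: eq_bigr => x _; apply: eq_bigr => i _; rewrite ffunE.
Qed.

Lemma prod_eq_bits n (x y : 'I_(2 ^ n)) :
  \prod_(i < n) ((bit x i == bit y i)%:R : algC) = (x == y)%:R.
Proof.
have [->|neq_xy] := eqVneq x y; first by rewrite big1 // => i _; rewrite eqxx.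
have [i bit_neq] : exists i, bit x i != bit y i.
  apply/existsP; apply: contraR neq_xy; rewrite negb_exists => /forallP xy.
  by apply/eqP/eq_bits => i; apply/eqP; rewrite -[_ == _]negbK xy.
by rewrite (bigD1 i) //= (negbTE bit_neq) mul0r.
Qed.

Section TensorProducts.
Variable n : nat.
Implicit Types A B : 'I_n -> 'M[algC]_2.

Lemma eq_ntens A B : A =1 B -> ntens A = ntens B.
Proof.
by move=> AB; apply/matrixP => x y; rewrite !mxE; apply: eq_bigr => i _; rewrite AB.
Qed.

Lemma mul_ntens A B : ntens A *m ntens B = ntens (fun i => A i *m B i).
Proof.
apply/matrixP => x y; rewrite !mxE.
under eq_bigr => z _ do rewrite !mxE -big_split /=.
rewrite (sum_prod_bits (fun i t => A i (bit x i) t * B i t (bit y i))).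
by apply: eq_bigr => i _; rewrite mxE.
Qed.

Lemma hadj_ntens A : hadj (ntens A) = ntens (fun i => hadj (A i)).
Proof.
by apply/matrixP => x y; rewrite !mxE rmorph_prod; apply: eq_bigr => i _; rewrite !mxE.
Qed.

Lemma mxtrace_ntens A : \tr (ntens A) = \prod_(i < n) \tr (A i).
Proof.
rewrite /mxtrace; under eq_bigr => x _ do rewrite mxE.
exact: (sum_prod_bits (fun i t => A i t t)).
Qed.

Lemma hs_ntens A B : hs (ntens A) (ntens B) = \prod_(i < n) hs (A i) (B i).
Proof. by rewrite /hs hadj_ntens mul_ntens mxtrace_ntens. Qed.

Lemma delta_mx_ntens (x y : 'I_(2 ^ n)) :
  delta_mx x y = ntens (fun i => delta_mx (bit x i) (bit y i)).
Proof.
apply/matrixP => a b; rewrite !mxE.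
under [RHS]eq_bigr => i _ do rewrite mxE -mulnb natrM.
by rewrite big_split /= !prod_eq_bits -natrM mulnb.
Qed.

Lemma diag_part_ntens A : diag_part (ntens A) = ntens (fun i => diag_part (A i)).
Proof.
apply/matrixP => x y; rewrite !mxE -mulr_natr.
under [RHS]eq_bigr => i _ do rewrite mxE -mulr_natr.
by rewrite big_split /= prod_eq_bits.
Qed.

Lemma Mmeas_diag_part (X : 'M[algC]_(2 ^ n)) : Mmeas X = diag_part X.
Proof.
have hs_Ebas x : hs (Ebas x) X = X x x.
  rewrite /hs hadj_delta /mxtrace (bigD1 x) //= big1 => [|y /negbTE ne]; last first.
    by rewrite mxE big1 // => z _; rewrite mxE ne mul0r.
  rewrite mxE (bigD1 x) //= big1 => [|z /negbTE nz]; last by rewrite mxE nz andbF mul0r.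
  by rewrite mxE !eqxx mul1r !addr0.
apply/matrixP => a b; rewrite /Mmeas summxE (bigD1 a) //= big1 => [|x /negbTE ne].
  by rewrite !mxE hs_Ebas eqxx addr0 eq_sym mulr_natr.
by rewrite !mxE eq_sym ne mulr0.
Qed.

Lemma card_LCl : #|LCl n| = (24 ^ n)%N.
Proof. by rewrite card_ffun card_prod !card_ord. Qed.

Lemma mean_ntens (F : 'I_n -> Cl1 -> 'M[algC]_2) :
  #|LCl n|%:R^-1 *: \sum_(g : LCl n) ntens (fun i => F i (g i)) =
  ntens (fun i => cl1_mean (F i)).
Proof.
apply/matrixP => x y; rewrite !mxE summxE.
under eq_bigr => g _ do rewrite mxE.
have -> : #|LCl n|%:R^-1 = \prod_(i < n) (24%:R^-1 : algC).
  by rewrite prodr_const card_ord card_LCl natrX exprVn.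
rewrite -(bigA_distr_bigA (fun i g1 => F i g1 (bit x i) (bit y i))) -big_split /=.
by apply: eq_bigr => i _; rewrite !mxE summxE.
Qed.

End TensorProducts.

(** * The frame operator of the local Clifford group *)

Lemma dephase_ntens n (U B : 'I_n -> 'M[algC]_2) :
  dephase (ntens U) (ntens B) = ntens (fun i => dephase (U i) (B i)).
Proof. by rewrite /dephase hadj_ntens !mul_ntens diag_part_ntens !mul_ntens. Qed.

Lemma frameSE n (X : 'M[algC]_(2 ^ n)) :
  frameS X = #|LCl n|%:R^-1 *: \sum_(g : LCl n) dephase (lcl_mx g) X.
Proof.
by congr (_ *: _); apply: eq_bigr => g _; rewrite /omega_adj Mmeas_diag_part.
Qed.

Lemma frameS_is_linear n : linear (@frameS n).
Proof.
move=> a X Y; rewrite !frameSE; under eq_bigr do rewrite linearP.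
by rewrite big_split -scaler_sumr /= scalerDr !scalerA mulrC.
Qed.
HB.instance Definition _ n := GRing.isLinear.Build algC
  'M[algC]_(2 ^ n) 'M[algC]_(2 ^ n) *:%R (@frameS n) (@frameS_is_linear n).

Lemma frameS_ntens n (B : 'I_n -> 'M[algC]_2) :
  frameS (ntens B) = ntens (fun i => frame1 (B i)).
Proof.
rewrite frameSE; under eq_bigr do rewrite dephase_ntens.
exact: (mean_ntens (fun i g => dephase (cl1_mx g) (B i))).
Qed.

Definition tensor_map n (F : 'M[algC]_2 -> 'M[algC]_2) (A : 'M[algC]_(2 ^ n)) :
    'M[algC]_(2 ^ n) :=
  \sum_(x < 2 ^ n) \sum_(y < 2 ^ n)
    A x y *: ntens (fun i => F (delta_mx (bit x i) (bit y i))).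

Lemma tensor_map_is_linear n F : linear (@tensor_map n F).
Proof.
move=> a A B; rewrite /tensor_map scaler_sumr -big_split /=; apply: eq_bigr => x _.
rewrite scaler_sumr -big_split /=; apply: eq_bigr => y _.
by rewrite !mxE scalerDl scalerA.
Qed.
HB.instance Definition _ n F := GRing.isLinear.Build algC
  'M[algC]_(2 ^ n) 'M[algC]_(2 ^ n) *:%R (@tensor_map n F) (tensor_map_is_linear F).

Lemma tensor_map_ntens n (F : {linear 'M[algC]_2 -> 'M[algC]_2})
    (B : 'I_n -> 'M[algC]_2) :
  tensor_map F (ntens B) = ntens (fun i => F (B i)).
Proof.
apply/matrixP => a b; rewrite /tensor_map summxE.
under eq_bigr => x _ do rewrite summxE.
under eq_bigr => x _ do under eq_bigr => y _ do rewrite !mxE -big_split /=.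
under eq_bigr => x _ do rewrite (sum_prod_bits (fun i t => B i (bit x i) t *
   F (delta_mx (bit x i) t) (bit a i) (bit b i))).
rewrite (sum_prod_bits (fun i s =>
  \sum_(t < 2) B i s t * F (delta_mx s t) (bit a i) (bit b i))) mxE.
apply: eq_bigr => i _; rewrite [in RHS](matrix_sum_delta (B i)) !linear_sum summxE.
by apply: eq_bigr => s _; rewrite linear_sum summxE; apply: eq_bigr => t _;
  rewrite linearZ mxE.
Qed.

Lemma frameSK n : cancel (@frameS n) (tensor_map frame1_inv).
Proof.
apply: (@eq_linear_delta _ _ _ (tensor_map frame1_inv \o @frameS n) idfun).
move=> x y /=; rewrite delta_mx_ntens frameS_ntens tensor_map_ntens.
by apply: eq_ntens => i; rewrite /= frame1_invK.
Qed.

Lemma sinv_frameS n (Y : 'M[algC]_(2 ^ n)) :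
  sinv (@frameS n) Y = tensor_map frame1_inv Y.
Proof.
have frameS_lin_inv : lin_mx (@frameS n) *m lin_mx (tensor_map frame1_inv) = 1%:M.
  apply/row_matrixP => i; rewrite row_mul !rowE mulmx1.
  by rewrite !mul_rV_lin /= mxvecK frameSK vec_mxK.
have [unit_frameS _] := mulmx1_unit frameS_lin_inv.
rewrite /sinv (_ : invmx _ = lin_mx (tensor_map frame1_inv)).
  by rewrite mul_vec_lin mxvecK.
by rewrite -[RHS]mul1mx -(mulVmx unit_frameS) -mulmxA frameS_lin_inv mulmx1.
Qed.

(** * The noise and the bias *)

Section Noise.
Variable n : nat.

(* The column g^dagger |x_g>, where x_g collects the likely outcomes. *)
Definition noise_vec (g : LCl n) : 'cV[algC]_(2 ^ n) :=
  \col_z \prod_(i < n) (cl1_mx (g i) (likely_outcome (g i)) (bit z i))^*.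

Definition noise (g : LCl n) (A : 'M[algC]_(2 ^ n)) : 'M[algC]_(2 ^ n) :=
  \tr A *: (noise_vec g *m hadj (noise_vec g)).

Lemma noise_vec_ntens g :
  noise_vec g *m hadj (noise_vec g) = ntens (fun i => cl1_state (g i)).
Proof.
apply/matrixP => z w; rewrite !mxE big_ord1 !mxE rmorph_prod -big_split /=.
by apply: eq_bigr => i _; rewrite conjCK conj_basis_entry.
Qed.

Lemma noise_vec_unit g : hadj (noise_vec g) *m noise_vec g = 1%:M.
Proof.
have tr1 : \tr (noise_vec g *m hadj (noise_vec g)) = 1.
  by rewrite noise_vec_ntens mxtrace_ntens big1 // => i _; exact: mxtrace_cl1_state.
apply/matrixP => a b; rewrite !ord1 [RHS]mxE eqxx mulr1n -tr1 mxtrace_mulC.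
by rewrite /mxtrace big_ord1.
Qed.

Lemma noise_channel g : is_channel (noise g).
Proof.
pose v := noise_vec g.
exists (2 ^ n)%N, (fun k => v *m delta_mx 0 k); split.
  under eq_bigr => k _ do rewrite hadjM hadj_delta -mulmxA (mulmxA (hadj v))
    noise_vec_unit mul1mx mul_delta_mx.
  exact: sum_delta_diag.
move=> A; rewrite /noise /mxtrace scaler_suml; apply: eq_bigr => k _.
rewrite hadjM hadj_delta -!mulmxA -/v (mulmxA (delta_mx 0 k)) (mulmxA _ _ (hadj v)).
have -> : delta_mx 0 k *m A *m delta_mx k 0 = (A k k)%:M :> 'M[algC]_1.
  by apply/matrixP => a b; rewrite !ord1 -rowE -colE !mxE eqxx.
by rewrite mul_scalar_mx -scalemxAr.
Qed.

Lemma dephase_noise g A :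
  dephase (lcl_mx g) (noise g A) = \tr A *: ntens (fun i => cl1_state (g i)).
Proof.
rewrite /noise linearZ /= noise_vec_ntens dephase_ntens.
by congr (_ *: _); apply: eq_ntens => i; rewrite dephase_cl1_state.
Qed.

Lemma frameS_noisyE eps A :
  frameS_noisy noise eps A =
  (1 - eps) *: frameS A + (eps * \tr A) *: ntens (fun _ => cl1_mean cl1_state).
Proof.
have phiE g : phi_eps noise eps g A = omega g ((1 - eps) *: A + eps *: noise g A).
  by rewrite /phi_eps /omega mulmxDr mulmxDl -!scalemxAr -!scalemxAl.
rewrite /frameS_noisy /unif_mean_op frameSE -scalerA -(mean_ntens (fun _ => cl1_state)).
under eq_bigr do rewrite phiE /omega_adj Mmeas_diag_part -/(dephase _ _) linearD
  2!linearZ /= dephase_noise.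
rewrite big_split /= -!scaler_sumr scalerDr !scalerA.
by congr (_ + _); congr (_ *: _); ring.
Qed.

End Noise.

Lemma hadj_projH : hadj projH = projH.
Proof. by rewrite /projH hadjM hadjK. Qed.

Lemma Ebas_state n (x : 'I_(2 ^ n)) : is_state (Ebas x).
Proof.
split; last by rewrite mxtrace_delta eqxx.
split; first exact: hadj_delta.
by move=> v; rewrite conj_basis_entry mulrC mul_conjC_ge0.
Qed.

Section Bias.
Variable n : nat.

Lemma hs_Obs (X : 'M[algC]_(2 ^ n)) : hs (Obs n) X = \tr (Obs n *m X).
Proof.
by rewrite /hs /Obs hadj_ntens (eq_ntens (fun=> hadj_projH)).
Qed.

Lemma mxtrace_Obs_Ebas x : \tr (Obs n *m Ebas x) = 2%:R^-1 ^+ n.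
Proof.
rewrite /Ebas delta_mx_ntens mul_ntens mxtrace_ntens -[n in _ ^+ n]card_ord.
by rewrite -prodr_const; apply: eq_bigr => i _; rewrite mxtrace_mul_delta projH_diag.
Qed.

Lemma hs_Obs_mean_state :
  hs (Obs n) (tensor_map frame1_inv (ntens (fun _ : 'I_n => cl1_mean cl1_state)))
  = ((1 + sqrtC 2) / 2%:R) ^+ n.
Proof.
rewrite tensor_map_ntens hs_ntens -[n in _ ^+ n]card_ord -prodr_const.
by apply: eq_bigr => i _; rewrite hs_projH_mean_state.
Qed.

Lemma bias_Ebas x (eps : algC) : 0 <= eps ->
  bias (Obs n) (Ebas x) (@noise n) eps =
  `|2%:R^-1 ^+ n - ((1 + sqrtC 2) / 2%:R) ^+ n| * eps.
Proof.
move=> eps_ge0; rewrite /bias sinv_frameS frameS_noisyE linearD.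
rewrite [X in hs _ (X + _)]linearZ /= frameSK linearZ /=.
have [_ ->] := Ebas_state x.
rewrite !hs_Obs mulmxDr -!scalemxAr mxtraceD !mxtraceZ -!hs_Obs hs_Obs_mean_state.
rewrite hs_Obs mxtrace_Obs_Ebas mulr1.
have -> : forall a b : algC, a - ((1 - eps) * a + eps * b) = eps * (a - b).
  by move=> a b; ring.
by rewrite normrM (ger0_norm eps_ge0) mulrC.
Qed.

End Bias.

(** * Growth of the bias *)

Lemma sqrtC_sqrtCK (x : algC) : sqrtC (sqrtC x) ^+ 4 = x.
Proof. by rewrite (_ : 4%N = (2 * 2)%N) // exprM !sqrtCK. Qed.

Lemma root4_le_pow (q : algC) n : 0 <= q -> 2%:R <= q ^+ 4 ->
  sqrtC (sqrtC (2 ^ n)%:R) <= q ^+ n.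
Proof.
move=> q_ge0 q4_ge2; rewrite -(ler_pXn2r (isT : (0 < 4)%N)) ?nnegrE ?exprn_ge0
  ?sqrtC_ge0 ?sqrtC_ge0 ?ler0n //.
rewrite sqrtC_sqrtCK -exprM mulnC exprM natrX.
by apply: lerXn2r; rewrite ?nnegrE ?ler0n ?exprn_ge0.
Qed.

Lemma half_root4_le_gap (q : algC) n : (0 < n)%N -> 0 <= q -> 2%:R <= q ^+ 4 ->
  2%:R^-1 * sqrtC (sqrtC (2 ^ n)%:R) <= `|2%:R^-1 ^+ n - q ^+ n|.
Proof.
move=> n_gt0 q_ge0 q4_ge2; have r_le := root4_le_pow n q_ge0 q4_ge2.
set r := sqrtC _ in r_le *.
have r_ge1 : 1 <= r.
  rewrite -(ler_pXn2r (isT : (0 < 4)%N)) ?nnegrE ?ler01 ?sqrtC_ge0 ?sqrtC_ge0 ?ler0n //.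
  by rewrite sqrtC_sqrtCK expr1n ler1n expn_gt0.
have half_le1 : 2%:R^-1 <= 1 :> algC by rewrite invf_le1 ?ler1n ?ltr0n.
have halfn_le : 2%:R^-1 ^+ n <= 2%:R^-1 :> algC.
  by rewrite -[leRHS]expr1; apply: ler_wiXn2l; rewrite ?invr_ge0 ?ler0n.
rewrite distrC ger0_norm; last first.
  by rewrite subr_ge0 (le_trans halfn_le) // (le_trans half_le1) // (le_trans r_ge1).
rewrite (le_trans _ (lerB r_le halfn_le)) // -subr_ge0.
have -> : r - 2%:R^-1 - 2%:R^-1 * r = (r - 1) / 2%:R by field.
by rewrite divr_ge0 ?ler0n // subr_ge0.
Qed.

Lemma one_add_sqrt2_half_expr4_ge2 : 2%:R <= ((1 + sqrtC 2) / 2%:R) ^+ 4 :> algC.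
Proof.
set s : algC := sqrtC 2.
have ss : s * s = 2 by rewrite -expr2 sqrtCK.
have s_ge : 5%:R / 4%:R <= s.
  rewrite -(ler_pXn2r (isT : (0 < 2)%N)) ?nnegrE ?divr_ge0 ?sqrtC_ge0 ?ler0n //.
  by rewrite sqrtCK -subr_ge0 (_ : 2 - _ = 7%:R / 16%:R) ?divr_ge0 ?ler0n //; field.
have -> : ((1 + s) / 2%:R) ^+ 4 = (17%:R + 12%:R * s) / 16%:R.
  transitivity ((1 + 4%:R * s + 6%:R * (s * s) + 4%:R * (s * s) * s
    + (s * s) * (s * s)) / 16%:R : algC); first by field.
  by rewrite ss; field.
rewrite ler_pdivlMr ?ltr0n // -subr_ge0.
rewrite (_ : _ - _ = 12%:R * (s - 5%:R / 4%:R)); last by field.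
by rewrite mulr_ge0 ?ler0n // subr_ge0.
Qed.

Theorem proposition1 :
  exists (c : algC) (N : nat), 0 < c /\
  forall n : nat,
  exists (rho : 'M[algC]_(2 ^ n))
         (Lam : LCl n -> 'M[algC]_(2 ^ n) -> 'M[algC]_(2 ^ n))
         (kappa : algC),
    is_state rho /\
    (forall g, is_channel (Lam g)) /\
    (forall eps : algC, 0 <= eps <= 1 -> bias (Obs n) rho Lam eps = kappa * eps) /\
    ((N <= n)%N -> c * sqrtC (sqrtC (2 ^ n)%:R) <= kappa).
Proof.
exists 2%:R^-1, 1%N; split; first by rewrite invr_gt0 ltr0n.
move=> n; have dim_gt0 : (0 < 2 ^ n)%N by rewrite expn_gt0.
exists (Ebas (Ordinal dim_gt0)), (@noise n),
  `|2%:R^-1 ^+ n - ((1 + sqrtC 2) / 2%:R) ^+ n|.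
split; first exact: Ebas_state.
split; first exact: noise_channel.
split; first by move=> eps /andP[eps_ge0 _]; rewrite bias_Ebas.
move=> n_gt0; apply: half_root4_le_gap one_add_sqrt2_half_expr4_ge2 => //.
by rewrite divr_ge0 ?ler0n // addr_ge0 ?ler01 ?sqrtC_ge0 ?ler0n.
Qed.
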